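(* Let $G$ be a finitely generated torsion-free nilpotent group, and suppose $\overline{G}=R_1\times\cdots\times R_m=K_1\times\cdots\times K_m$ are two decompositions of $\overline{G}$ into nontrivial, rationally indecomposable rational subgroups, indexed so that for every $i$: the restriction to $K_i$ of the projection $\alpha_i:\overline{G}\to R_i$ is an isomorphism onto $R_i$ whose inverse is the restriction to $R_i$ of the projection $\beta_i:\overline{G}\to K_i$, and $\overline{G}=R_1\times\cdots\times R_{i-1}\times K_i\times R_{i+1}\times\cdots\times R_m$. Then $K_iZ(\overline{G})=R_iZ(\overline{G})$ for all $i$.
   Context: $\overline{G}$ is the rational closure (Malcev completion) of $G$: a torsion-free nilpotent group containing $G$ in which every element has a unique $n$-th root for each $n\ge1$ and some positive power of every element lies in $G$. A subgroup is rational if closed under taking $n$-th roots for all $n\ge1$; rationally indecomposable means not a direct product of two nontrivial rational subgroups. $Z(\cdot)$ denotes the center. *)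

From Stdlib Require Import Arith List.
Set Implicit Arguments.

Record group := Group {
  carrier :> Type;
  gmul : carrier -> carrier -> carrier;
  gone : carrier;
  ginv : carrier -> carrier;
  gmulA : forall x y z, gmul x (gmul y z) = gmul (gmul x y) z;
  gmul1l : forall x, gmul gone x = x;
  gmulVl : forall x, gmul (ginv x) x = gone
}.

Section Defs.
Variable Gb : group.
Notation T := (carrier Gb).
Notation "x * y" := (gmul Gb x y).
Notation "1" := (gone Gb).

Fixpoint gpow (x : T) (n : nat) : T :=
  match n with 0 => 1 | S n => gpow x n * x end.

Definition comm (x y : T) : T := ginv Gb x * ginv Gb y * x * y.

Inductive gen (S : T -> Prop) : T -> Prop :=
| gen_in : forall x, S x -> gen S x
| gen_one : gen S 1
| gen_mul : forall x y, gen S x -> gen S y -> gen S (x * y)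
| gen_inv : forall x, gen S x -> gen S (ginv Gb x).

Definition subgroup (H : T -> Prop) : Prop :=
  H 1 /\ (forall x y, H x -> H y -> H (x * y)) /\ (forall x, H x -> H (ginv Gb x)).

Definition normal_in (H N : T -> Prop) : Prop :=
  forall h x, H h -> N x -> N (h * x * ginv Gb h).

Definition nontrivial (H : T -> Prop) : Prop := exists x, H x /\ x <> 1.

Fixpoint lcs (n : nat) : T -> Prop :=
  match n with
  | 0 => fun _ => True
  | S n => gen (fun c => exists x y, lcs n x /\ c = comm x y)
  end.

Definition nilpotent : Prop := exists n, forall x, lcs n x -> x = 1.

Definition torsion_free : Prop := forall x n, 1 <= n -> gpow x n = 1 -> x = 1.

Definition fin_generated (H : T -> Prop) : Prop :=
  exists l : list T, forall x, H x <-> gen (fun y => In y l) x.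

(* the whole group Gb is the rational closure (Malcev completion) of the subgroup G *)
Definition rational_closure_of (G : T -> Prop) : Prop :=
  subgroup G /\ torsion_free /\ nilpotent /\
  (forall x n, 1 <= n -> exists y, gpow y n = x /\ forall y', gpow y' n = x -> y' = y) /\
  (forall x, exists n, 1 <= n /\ G (gpow x n)).

Definition rational_subgroup (H : T -> Prop) : Prop :=
  subgroup H /\ forall x n, 1 <= n -> H (gpow x n) -> H x.

Fixpoint prodf (m : nat) (f : nat -> T) : T :=
  match m with 0 => 1 | S m => prodf m f * f m end.

Definition is_dprod (H : T -> Prop) (m : nat) (R : nat -> T -> Prop) : Prop :=
  (forall i, i < m -> subgroup (R i) /\ (forall x, R i x -> H x) /\ normal_in H (R i)) /\
  (forall h, H h -> exists f, (forall i, i < m -> R i (f i)) /\ h = prodf m f) /\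
  (forall f f', (forall i, i < m -> R i (f i)) -> (forall i, i < m -> R i (f' i)) ->
     prodf m f = prodf m f' -> forall i, i < m -> f i = f' i).

Definition rationally_indecomposable (H : T -> Prop) : Prop :=
  ~ exists A B, rational_subgroup A /\ rational_subgroup B /\ nontrivial A /\ nontrivial B /\
      is_dprod H 2 (fun j => if Nat.eqb j 0 then A else B).

Definition proj (m : nat) (R : nat -> T -> Prop) (i : nat) (g x : T) : Prop :=
  exists f, (forall j, j < m -> R j (f j)) /\ g = prodf m f /\ x = f i.

Definition center (x : T) : Prop := forall y, x * y = y * x.

Definition mul_set (A B : T -> Prop) (x : T) : Prop :=
  exists a b, A a /\ B b /\ x = a * b.

End Defs.

(* Only the three decompositions matter.  If [G = H_1 x ... x H_m] and [x]
   commutes with every [H_j], [j <> i], write [x = h_i s] with [s] the product of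
   the other components of [x].  Then [s] commutes with [H_i] (it lies in the
   other factors) and with each [H_j], [j <> i] (since [s = h_i^-1 x]), so [s] is
   central and [x] lies in [H_i Z].  Every [k] in [K_i] commutes with the [R_j],
   [j <> i], by the mixed decomposition, giving [K_i Z <= R_i Z]; for the converse
   the same argument is run in the decomposition by the [K_j], testing centrality
   against the mixed decomposition. *)
From Stdlib Require Import Arith Lia.

Set Implicit Arguments.

Section GroupFacts.
Variable Gb : group.
Local Notation T := (carrier Gb).
Local Infix "*" := (gmul Gb).
Local Notation one := (gone Gb).
Local Notation inv := (ginv Gb).
Local Notation prodf := (@prodf Gb).
Local Notation is_dprod := (@is_dprod Gb).
Local Notation center := (@center Gb).
Local Notation TT := (fun _ : T => True).

Lemma gmulV (x : T) : x * inv x = one.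
Proof.
  rewrite <- (gmul1l Gb (x * inv x)), <- (gmulVl Gb (inv x)) at 1.
  rewrite <- gmulA, (gmulA Gb (inv x)), gmulVl, gmul1l.
  apply gmulVl.
Qed.

Lemma gmul1r (x : T) : x * one = x.
Proof. rewrite <- (gmulVl Gb x), gmulA, gmulV. apply gmul1l. Qed.

Lemma gmulKl (x y : T) : inv x * (x * y) = y.
Proof. rewrite gmulA, gmulVl. apply gmul1l. Qed.

Lemma gmulKr (x y : T) : x * (inv x * y) = y.
Proof. rewrite gmulA, gmulV. apply gmul1l. Qed.

Lemma gmulI (a x y : T) : a * x = a * y -> x = y.
Proof. intro E. rewrite <- (gmulKl a x), <- (gmulKl a y), E. reflexivity. Qed.

Lemma ginvK (x : T) : inv (inv x) = x.
Proof. apply (gmulI (inv x)). rewrite gmulV, gmulVl. reflexivity. Qed.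

Definition commute (a b : T) : Prop := a * b = b * a.

Lemma commute_sym a b : commute a b -> commute b a.
Proof. unfold commute; auto. Qed.

Lemma commute1 a : commute one a.
Proof. unfold commute. rewrite gmul1l, gmul1r. reflexivity. Qed.

Lemma commuteM a b c : commute a c -> commute b c -> commute (a * b) c.
Proof.
  unfold commute; intros Ha Hb.
  rewrite <- gmulA, Hb, gmulA, Ha, gmulA. reflexivity.
Qed.

Lemma commuteV a b : commute a b -> commute (inv a) b.
Proof.
  unfold commute; intro E.
  apply (gmulI a). rewrite gmulKr, gmulA, E, <- gmulA, gmulV, gmul1r. reflexivity.
Qed.

Lemma commute_prodf m f y :
  (forall j, j < m -> commute (f j) y) -> commute (prodf m f) y.
Proof.
  induction m; simpl; intro H.
  - apply commute1.
  - apply commuteM; auto.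
Qed.

Lemma center_mul a b : center a -> center b -> center (a * b).
Proof.
  intros Ha Hb y. unfold center in *.
  rewrite <- gmulA, Hb, gmulA, Ha, gmulA. reflexivity.
Qed.

Lemma prodf_ext m f g : (forall j, j < m -> f j = g j) -> prodf m f = prodf m g.
Proof.
  induction m; simpl; intro H; auto.
  rewrite IHm, H by auto. reflexivity.
Qed.

Lemma prodf1 m : prodf m (fun _ => one) = one.
Proof. induction m; simpl; [reflexivity|]. rewrite IHm. apply gmul1r. Qed.

Lemma prodf_delta m i x :
  i < m -> prodf m (fun j => if j =? i then x else one) = x.
Proof.
  induction m; intro Hi; [lia | simpl].
  destruct (Nat.eq_dec i m) as [-> | Hne].
  - rewrite Nat.eqb_refl, (@prodf_ext m _ (fun _ => one)), prodf1; [apply gmul1l|].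
    intros j Hj. destruct (Nat.eqb_spec j m); [lia | reflexivity].
  - destruct (Nat.eqb_spec m i); [lia|]. rewrite IHm by lia. apply gmul1r.
Qed.

Lemma prodf_extract m f i :
  i < m -> (forall j, j < m -> commute (f i) (f j)) ->
  prodf m f = f i * prodf m (fun j => if j =? i then one else f j).
Proof.
  revert i. induction m; intros i Hi H; [lia | simpl].
  destruct (Nat.eq_dec i m) as [-> | Hne].
  - rewrite Nat.eqb_refl, gmul1r, (@prodf_ext m (fun j => if j =? m then one else f j) f).
    + apply commute_prodf. intros j Hj. apply commute_sym, H; lia.
    + intros j Hj. destruct (Nat.eqb_spec j m); [lia | reflexivity].
  - destruct (Nat.eqb_spec m i); [lia|].
    rewrite (IHm i), gmulA by (auto; lia). reflexivity.
Qed.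

Lemma dprod_center m (H : nat -> T -> Prop) s : is_dprod TT m H -> (forall j y, j < m -> H j y -> commute s y) -> center s.
Proof.
  intros dprodH Hs y. destruct dprodH as [_ [Hdec _]].
  destruct (Hdec y I) as [f [Hf ->]].
  apply commute_sym, commute_prodf. intros j Hj. apply commute_sym; eauto.
Qed.

Section Decomposition.
Variables (m : nat) (H : nat -> T -> Prop).
Hypothesis dprodH : is_dprod TT m H.

Lemma dprod_meet1 i j x :
  i < m -> j < m -> i <> j -> H i x -> H j x -> x = one.
Proof.
  intros Hi Hj Hij Hxi Hxj.
  destruct dprodH as [Hsub [_ Huniq]].
  assert (Hdelta : forall k, k < m -> H k x ->
            forall l, l < m -> H l (if l =? k then x else one)).
  { intros k Hk Hxk l Hl. destruct (Nat.eqb_spec l k) as [-> | _]; auto.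
    apply (Hsub l Hl). }
  pose proof (Huniq _ _ (Hdelta i Hi Hxi) (Hdelta j Hj Hxj)) as E.
  rewrite !prodf_delta in E by assumption.
  specialize (E eq_refl i Hi). simpl in E.
  rewrite Nat.eqb_refl in E. destruct (Nat.eqb_spec i j); [lia | exact E].
Qed.

(* The commutator of [a] and [b] lies in both [H i] and [H j] by normality. *)
Lemma dprod_commute i j a b :
  i < m -> j < m -> i <> j -> H i a -> H j b -> commute a b.
Proof.
  intros Hi Hj Hij Ha Hb.
  destruct dprodH as [Hsub _].
  destruct (Hsub i Hi) as [[_ [Mi Vi]] [_ Ni]].
  destruct (Hsub j Hj) as [[_ [Mj Vj]] [_ Nj]].
  set (c := inv a * inv b * a * b).
  assert (Ci : H i c).
  { replace c with (inv a * (inv b * a * inv (inv b)))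
      by (unfold c; rewrite ginvK, !gmulA; reflexivity).
    apply Mi; auto. }
  assert (Cj : H j c).
  { unfold c. apply Mj; auto.
    pose proof (Nj (inv a) (inv b) I (Vj _ Hb)) as E. rewrite ginvK in E. exact E. }
  assert (Ec : b * a * c = a * b).
  { unfold c. rewrite !gmulA, <- (gmulA Gb b a (inv a)), gmulV, gmul1r, gmulV, gmul1l.
    reflexivity. }
  unfold commute. rewrite <- Ec, (dprod_meet1 Hi Hj Hij Ci Cj), gmul1r. reflexivity.
Qed.

Lemma mul_center_of_commute (C : nat -> T -> Prop) i x :
  is_dprod TT m C -> i < m -> (forall y, C i y -> H i y) ->
  (forall j a c, j < m -> j <> i -> H i a -> C j c -> commute a c) ->
  (forall j c, j < m -> j <> i -> C j c -> commute x c) ->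
  mul_set Gb (H i) center x.
Proof.
  intros dprodC Hi CiHi HiCj xCj.
  pose proof dprodH as [_ [Hdec _]].
  destruct (Hdec x I) as [f [Hf Ex]].
  set (s := prodf m (fun j => if j =? i then one else f j)).
  assert (Exs : x = f i * s).
  { rewrite Ex. apply prodf_extract; auto. intros j Hj.
    destruct (Nat.eq_dec j i) as [-> | Hne]; [reflexivity|].
    apply (dprod_commute (i := i) (j := j)); auto. }
  assert (Zs : center s).
  { apply (dprod_center dprodC). intros j y Hj Hy.
    destruct (Nat.eq_dec j i) as [-> | Hne].
    - apply commute_prodf. intros l Hl. destruct (Nat.eqb_spec l i) as [-> | Hli].
      + apply commute1.
      + apply (dprod_commute (i := l) (j := i)); auto.
    - replace s with (inv (f i) * x) by (rewrite Exs, gmulKl; reflexivity).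
      apply commuteM; [apply commuteV|]; eauto. }
  exists (f i), s. auto.
Qed.

End Decomposition.

Lemma mul_set_center_sub (A B : T -> Prop) x :
  (forall a, A a -> mul_set Gb B center a) ->
  mul_set Gb A center x -> mul_set Gb B center x.
Proof.
  intros AB [a [z [Ha [Hz ->]]]].
  destruct (AB a Ha) as [b [z' [Hb [Hz' ->]]]].
  exists b, (z' * z). rewrite gmulA. auto using center_mul.
Qed.

End GroupFacts.

Theorem mainTheorem9 (Gb : group) (G : Gb -> Prop) (m : nat)
    (R K : nat -> Gb -> Prop) :
  @fin_generated Gb G ->
  @rational_closure_of Gb G ->
  @is_dprod Gb (fun _ => True) m R ->
  @is_dprod Gb (fun _ => True) m K ->
  (forall i, i < m ->
     @rational_subgroup Gb (R i) /\ @nontrivial Gb (R i) /\ @rationally_indecomposable Gb (R i) /\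
     @rational_subgroup Gb (K i) /\ @nontrivial Gb (K i) /\ @rationally_indecomposable Gb (K i)) ->
  (forall i, i < m ->
     (* alpha_i restricted to K_i is an isomorphism onto R_i, with inverse beta_i restricted to R_i *)
     (forall k r, K i k -> @proj Gb m R i k r -> @proj Gb m K i r k) /\
     (forall r k, R i r -> @proj Gb m K i r k -> @proj Gb m R i k r) /\
     @is_dprod Gb (fun _ => True) m (fun j => if Nat.eqb j i then K i else R j)) ->
  forall i, i < m ->
    forall x, @mul_set Gb (K i) (@center Gb) x <-> @mul_set Gb (R i) (@center Gb) x.
Proof.
  intros _ _ dprodR dprodK _ Hmixed i Hi x.
  destruct (Hmixed i Hi) as [_ [_ dprodM]].
  set (M := fun j => if j =? i then K i else R j) in dprodM.
  assert (MK : forall y, M i y -> K i y) by (unfold M; rewrite Nat.eqb_refl; auto).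
  assert (MR : forall j y, j <> i -> M j y -> R j y)
    by (unfold M; intros j y Hji; destruct (Nat.eqb_spec j i); tauto).
  assert (KR : forall j a c, j < m -> j <> i -> K i a -> R j c -> @commute Gb a c).
  { intros j a c Hj Hji Ha Hc. apply (dprod_commute dprodM (i := i) (j := j)); auto.
    - unfold M. rewrite Nat.eqb_refl. exact Ha.
    - unfold M. destruct (Nat.eqb_spec j i); [lia | exact Hc]. }
  assert (RR : forall j a c, j < m -> j <> i -> R i a -> R j c -> @commute Gb a c)
    by (intros j a c Hj Hji; apply (dprod_commute dprodR); auto).
  split; apply mul_set_center_sub; intros a Ha.
  - apply (mul_center_of_commute dprodR dprodR); eauto.
  - apply (mul_center_of_commute dprodK dprodM); eauto.
Qed.
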